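(* The triple $(\mathcal{E}, \nabla^{\mathrm{sp}}, \gamma)$ with $\mathcal{E} = A^{4}$, $\nabla^{\mathrm{sp}}(e_{\alpha}) = 0$ (extended by the left Leibniz rule) and $\gamma(\mathrm{d} z^{i}\otimes_{A} e_{\alpha}) = \gamma_{\theta}^{i}\, e_{\alpha}$ (extended left $A$-linearly) is a spinorial structure on the Riemannian structure $(g,(\nabla,\sigma))$ on $\mathbb{R}^4_\theta$, i.e.\ it satisfies the Clifford relations $\gamma_{[2]}(\omega\otimes_A\zeta\otimes_A s)+\gamma_{[2]}(\sigma(\omega\otimes_A\zeta)\otimes_A s) = -2\,g^{-1}(\omega\otimes_A\zeta)\,s$ and Clifford compatibility $\nabla^{\mathrm{sp}}\circ\gamma = (\mathrm{id}\otimes_A\gamma)\circ\nabla^\otimes$.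
   Context: Let $A = \mathbb{C}[z^{1},z^{2},z^{3},z^{4}]/(z^{i} z^{j} - R^{ji} z^{j} z^{i})$ be the algebra of $\mathbb{R}^4_\theta$ in complex coordinates ($z^3=\overline{z^1}$, $z^4=\overline{z^2}$), where $R$ is the matrix with rows $(1,e^{-i\theta},1,e^{i\theta})$, $(e^{i\theta},1,e^{-i\theta},1)$, $(1,e^{i\theta},1,e^{-i\theta})$, $(e^{-i\theta},1,e^{i\theta},1)$, $\theta\in\mathbb{R}$. The differential calculus $\Omega^1_A$ is the free left $A$-module with basis $\mathrm{d} z^i$, with right action $\mathrm{d} z^i\, z^j = R^{ji} z^j\,\mathrm{d} z^i$ and $\mathrm{d}(z^i)=\mathrm{d} z^i$. The metric is $g=\sum_{i,j} g_{ij}\,\mathrm{d} z^i\otimes_A\mathrm{d} z^j$ with $(g_{ij}) = \tfrac{1}{2}$ times the matrix with rows $(0,0,1,0),(0,0,0,1),(1,0,0,0),(0,1,0,0)$, inverse metric $g^{-1}(\mathrm{d} z^i\otimes_A\mathrm{d} z^j)=g^{ij}$ with $(g^{ij})$ equal to $2$ times the same matrix. The bimodule connection is $\nabla(\mathrm{d} z^i)=0$ (left Leibniz rule) and $\sigma(\mathrm{d} z^i\otimes_A\mathrm{d} z^j) = R^{ji}\,\mathrm{d} z^j\otimes_A\mathrm{d} z^i$. $\{e_\alpha\}$ is the standard basis of $A^4$. The deformed gamma matrices are, in $2\times 2$ block form with Pauli matrices $\sigma^k$ and identity $I_2$: $\gamma_\theta^{1}$ has off-diagonal blocks $e^{\frac{i}{4}\theta}(-\sigma^{1}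 - i\sigma^{2})$ (upper right) and $e^{-\frac{i}{4}\theta}(\sigma^{1} + i\sigma^{2})$ (lower left); $\gamma_\theta^{2}$: $e^{-\frac{i}{4}\theta}(-\sigma^{3} - I_{2})$ and $e^{\frac{i}{4}\theta}(\sigma^{3} -I_{2})$; $\gamma_\theta^{3}$: $e^{\frac{i}{4}\theta}(-\sigma^{1} + i\sigma^{2})$ and $e^{-\frac{i}{4}\theta}(\sigma^{1} - i\sigma^{2})$; $\gamma_\theta^{4}$: $e^{-\frac{i}{4}\theta}(-\sigma^{3} + I_{2})$ and $e^{\frac{i}{4}\theta}(\sigma^{3} + I_{2})$. Here $\gamma_{[2]} = \gamma\circ(\mathrm{id}\otimes_A\gamma)$ and $\nabla^\otimes(\omega\otimes_A s) = \nabla(\omega)\otimes_A s + (\sigma\otimes_A\mathrm{id})(\omega\otimes_A\nabla^{\mathrm{sp}}(s))$. *)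

From HB Require Import structures.
From mathcomp Require Import all_boot all_order all_algebra.
From mathcomp Require Import all_classical all_reals all_analysis.
From mathcomp Require Import complex.

Set Implicit Arguments.
Unset Strict Implicit.
Unset Printing Implicit Defensive.

Import Order.TTheory GRing.Theory Num.Theory.
Local Open Scope ring_scope.

Section R4theta.
Variable R : realType.
Local Notation C := (R[i]).

Definition eix (x : R) : C := Complex (cos x) (sin x).

Definition ci : C := Complex 0 1.

(** Index conventions: the paper's indices 1,2,3,4 are the ordinals 0,1,2,3 of 'I_4. *)

(** The matrix R; Rmat theta j i is the entry R^{ji} (row j, column i). *)
Definition mx_of_seq (n : nat) (l : seq (seq C)) : 'M[C]_n :=
  \matrix_(i < n, j < n) nth 0 (nth [::] l i) j.

Definition Rmat (theta : R) : 'M[C]_4 :=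
  mx_of_seq 4
   [:: [:: 1; eix (- theta); 1; eix theta];
       [:: eix theta; 1; eix (- theta); 1];
       [:: 1; eix theta; 1; eix (- theta)];
       [:: eix (- theta); 1; eix theta; 1] ].

Definition Pmat : 'M[C]_4 :=
  mx_of_seq 4
   [:: [:: 0; 0; 1; 0]; [:: 0; 0; 0; 1]; [:: 1; 0; 0; 0]; [:: 0; 1; 0; 0] ].

Definition gmet : 'M[C]_4 := 2^-1 *: Pmat.
Definition ginv : 'M[C]_4 := 2 *: Pmat.

Definition pauli1 : 'M[C]_2 := mx_of_seq 2 [:: [:: 0; 1]; [:: 1; 0]].
Definition pauli2 : 'M[C]_2 := mx_of_seq 2 [:: [:: 0; - ci]; [:: ci; 0]].
Definition pauli3 : 'M[C]_2 := mx_of_seq 2 [:: [:: 1; 0]; [:: 0; -1]].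

Definition offdiag (U L : 'M[C]_2) : 'M[C]_4 := block_mx 0 U L 0.

Definition gamma_theta (theta : R) (i : 'I_4) : 'M[C]_4 :=
  let q := eix (theta / 4) in let qi := eix (- (theta / 4)) in
  [:: offdiag (q *: (- pauli1 - ci *: pauli2)) (qi *: (pauli1 + ci *: pauli2));
      offdiag (qi *: (- pauli3 - 1%:M)) (q *: (pauli3 - 1%:M));
      offdiag (q *: (- pauli1 + ci *: pauli2)) (qi *: (pauli1 - ci *: pauli2));
      offdiag (qi *: (- pauli3 + 1%:M)) (q *: (pauli3 + 1%:M)) ]`_i.

(** ** The algebra A = C[z^1,..,z^4]/(z^i z^j - R^{ji} z^j z^i).
    It has the PBW basis of ordered monomials z^m = (z^1)^{m_1}(z^2)^{m_2}(z^3)^{m_3}(z^4)^{m_4};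
    an element is represented by its coefficient function mon -> C (finitely supported). *)
Definition mon := 'I_4 -> nat.
Definition Aelt := mon -> C.

Definition finsupp (a : Aelt) : Prop :=
  exists N : nat, forall m : mon, a m != 0 -> forall i, (m i < N)%N.

Definition Azero : Aelt := fun _ => 0.
Definition Aadd (a b : Aelt) : Aelt := fun m => a m + b m.
Definition Ascale (c : C) (a : Aelt) : Aelt := fun m => c * a m.
Definition Aone : Aelt := fun m => if [forall k, m k == 0%N] then 1 else 0.
Definition Az (i : 'I_4) : Aelt :=
  fun m => if [forall k, m k == (if k == i then 1 else 0)%N] then 1 else 0.

(** z^a z^b = (prod_{i > j} (R^{ji})^{a_i b_j}) z^{a+b} *)
Definition twist (theta : R) (a b : mon) : C :=
  \prod_(i < 4) \prod_(j < 4 | (j < i)%N) (Rmat theta j i) ^+ (a i * b j).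

Definition Amul (theta : R) (a b : Aelt) : Aelt := fun m =>
  \sum_(k : {dffun forall i : 'I_4, 'I_(m i).+1})
     let k1 : mon := fun i => nat_of_ord (k i) in
     let k2 : mon := fun i => (m i - k i)%N in
     twist theta k1 k2 * a k1 * b k2.

(** right action of A on the basis dz^k : dz^k a = phi_k(a) dz^k,
    determined by dz^k z^j = R^{jk} z^j dz^k. *)
Definition phiA (theta : R) (k : 'I_4) (a : Aelt) : Aelt :=
  fun m => (\prod_(j < 4) (Rmat theta j k) ^+ (m j)) * a m.

(** ** Free left A-modules, in coordinates w.r.t. their bases:
    Omega^1 (basis dz^i), E = A^4 (basis e_alpha), and the tensor products over A
    Omega^1 (x)_A E (basis dz^i (x) e_alpha), Omega^1 (x)_A Omega^1 (basis dz^i (x) dz^j),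
    Omega^1 (x)_A Omega^1 (x)_A E (basis dz^i (x) dz^j (x) e_alpha). *)
Definition Om1 := 'I_4 -> Aelt.
Definition Esp := 'I_4 -> Aelt.
Definition Om1E := 'I_4 -> 'I_4 -> Aelt.
Definition Om2 := 'I_4 -> 'I_4 -> Aelt.
Definition Om2E := 'I_4 -> 'I_4 -> 'I_4 -> Aelt.

(** (sum_i w_i dz^i) (x) (sum_a s_a e_a) = sum w_i phi_i(s_a) dz^i (x) e_a *)
Definition tensOE (theta : R) (w : Om1) (s : Esp) : Om1E :=
  fun i a => Amul theta (w i) (phiA theta i (s a)).
Definition tensOO (theta : R) (w z : Om1) : Om2 :=
  fun i j => Amul theta (w i) (phiA theta i (z j)).
Definition tens2E (theta : R) (W : Om2) (s : Esp) : Om2E :=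
  fun i j a => Amul theta (W i j) (phiA theta i (phiA theta j (s a))).
Definition tensO1E (theta : R) (w : Om1) (U : Om1E) : Om2E :=
  fun i j a => Amul theta (w i) (phiA theta i (U j a)).

Definition addE (s t : Esp) : Esp := fun a => Aadd (s a) (t a).
Definition addOE (s t : Om1E) : Om1E := fun i a => Aadd (s i a) (t i a).
Definition add2E (s t : Om2E) : Om2E := fun i j a => Aadd (s i j a) (t i j a).

(** sigma(dz^i (x) dz^j) = R^{ji} dz^j (x) dz^i, extended left A-linearly *)
Definition sigmaO (theta : R) (W : Om2) : Om2 :=
  fun j i m => Rmat theta j i * W i j m.
Definition sigma_id (theta : R) (V : Om2E) : Om2E :=
  fun j i a m => Rmat theta j i * V i j a m.

Definition ginvA (W : Om2) : Aelt := fun m => \sum_(i < 4) \sum_(j < 4) W i j m * ginv i j.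

Definition gammaA (theta : R) (T : Om1E) : Esp :=
  fun b m => \sum_(i < 4) \sum_(a < 4) T i a m * gamma_theta theta i b a.
Definition id_gammaA (theta : R) (V : Om2E) : Om1E :=
  fun i b m => \sum_(j < 4) \sum_(a < 4) V i j a m * gamma_theta theta j b a.
Definition gamma2A (theta : R) (V : Om2E) : Esp := gammaA theta (id_gammaA theta V).

(** d : A -> Omega^1, given in coordinates: d a = sum_k (d a k) dz^k. *)
Definition is_differential (theta : R) (d : Aelt -> 'I_4 -> Aelt) : Prop :=
  [/\ forall a b, finsupp a -> finsupp b -> d (Aadd a b) = fun k => Aadd (d a k) (d b k),
      forall c a, finsupp a -> d (Ascale c a) = fun k => Ascale c (d a k),
      forall a b, finsupp a -> finsupp b ->
        d (Amul theta a b) = fun k => Aadd (Amul theta a (d b k)) (Amul theta (d a k) (phiA theta k b))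
    & forall i, d (Az i) = fun k => if k == i then Aone else Azero].

(** Levi-Civita connection: nabla(dz^i) = 0, left Leibniz: nabla(sum_i w_i dz^i) = sum_i d w_i (x) dz^i *)
Definition nablaO (d : Aelt -> 'I_4 -> Aelt) (w : Om1) : Om2 := fun k i => d (w i) k.
Definition nabla_sp (d : Aelt -> 'I_4 -> Aelt) (s : Esp) : Om1E := fun k a => d (s a) k.
Definition nabla_tens (theta : R) (d : Aelt -> 'I_4 -> Aelt) (w : Om1) (s : Esp) : Om2E :=
  add2E (tens2E theta (nablaO d w) s) (sigma_id theta (tensO1E theta w (nabla_sp d s))).

End R4theta.

From Pilot Require Import Defs.
From HB Require Import structures.
From mathcomp Require Import all_boot all_order all_algebra.
From mathcomp Require Import all_classical all_reals all_analysis.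
From mathcomp Require Import complex.
From mathcomp Require Import ring zify.

(* Both identities are finite computations once two features of the twisted
   calculus are isolated.  For the Clifford relations, the tensor products only
   insert the twists [phi_i phi_j], which cancel whenever [g^{ij} <> 0]
   (i.e. [z^j] is the conjugate of [z^i]); what remains is the matrix identity
   [gamma^i gamma^j + R^{ji} gamma^j gamma^i = -2 g^{ij}], checked entrywise with
   [R^{ji}] a power of [q = e^{i theta/4}].  For Clifford compatibility, the
   Leibniz rule applied to [z^i x = phi_i(x) z^i] gives, after cancelling [z^i],
   [d(phi_i x) = R^{ki} phi_i(dx)] in the direction [dz^k]; hence [d(w_i phi_i(s_a))]
   splits into precisely the two terms of [nabla^(x)], and [gamma], having
   constant entries, commutes with [d]. *)

Set Implicit Arguments.
Unset Strict Implicit.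
Unset Printing Implicit Defensive.

Import GRing.Theory Num.Theory.
Local Open Scope ring_scope.

Section ConcentratedSum.
Variables (V : nmodType) (n : nat) (m : 'I_n -> nat).

Definition dffun_of (k0 : 'I_n -> nat) : {dffun forall i : 'I_n, 'I_(m i).+1} :=
  finfun (fun i => inord (k0 i)).

Lemma dffun_ofE k0 i : (k0 i <= m i)%N -> dffun_of k0 i = k0 i :> nat.
Proof. by move=> le_k0m; rewrite ffunE inordK. Qed.

Lemma big_dffun_single (G : {dffun forall i : 'I_n, 'I_(m i).+1} -> V) (k0 : 'I_n -> nat) :
  (forall k, G k != 0 -> forall i, k i = k0 i :> nat) ->
  \sum_k G k = if [forall i, k0 i <= m i]%N then G (dffun_of k0) else 0.
Proof.
move=> suppG; case: ifP => [/forallP le_k0m | /negbT/forallPn[i lt_m_k0]].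
  rewrite (bigD1 (dffun_of k0)) //= big1 ?addr0 // => k ne_k.
  apply/eqP; apply: contraR ne_k => /suppG eq_k; apply/eqP/ffunP => i.
  by apply/val_inj; rewrite /= dffun_ofE ?eq_k.
apply: big1 => k _; apply/eqP; apply: contraR lt_m_k0 => /suppG <-.
by rewrite -ltnS ltn_ord.
Qed.
End ConcentratedSum.

Section ComplexExponential.
Variable R : realType.

Lemma eixD (x y : R) : eix (x + y) = eix x * eix y.
Proof. by rewrite /eix cosD sinD; apply: (congr2 (@Complex R)); ring. Qed.

Lemma eixNK (x : R) : eix (- x) * eix x = 1.
Proof. by rewrite -eixD addNr /eix cos0 sin0. Qed.

Lemma eix_neq0 (x : R) : eix x != 0.
Proof. by apply: contra_eq_neq (eixNK x) => ->; rewrite mulr0 eq_sym oner_neq0. Qed.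

Lemma eixN (x : R) : eix (- x) = (eix x)^-1.
Proof. by apply: (mulIf (eix_neq0 x)); rewrite eixNK mulVf ?eix_neq0. Qed.

Lemma eix_quarter (x : R) : eix x = eix (x / 4) ^+ 4.
Proof.
rewrite {1}(_ : x = x / 4 + x / 4 + x / 4 + x / 4); last by field.
by rewrite !eixD; ring.
Qed.

Lemma ci_sqr : ci R * ci R = -1.
Proof. by apply: (congr2 (@Complex R)); ring. Qed.

End ComplexExponential.

Section TwistedPolynomials.
Variables (R : realType) (theta : R).
Local Notation Rm := (Rmat theta).
Local Notation Amul := (Amul theta).
Local Notation phiA := (phiA theta).
Local Notation twist := (twist theta).

Lemma Rmat_diag i : Rm i i = 1.
Proof. by case: i => [[|[|[|[|?]]]] ?] //; rewrite mxE. Qed.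

Lemma Rmat_mul_sym i j : Rm i j * Rm j i = 1.
Proof.
case: i => [[|[|[|[|?]]]] ?] //; case: j => [[|[|[|[|?]]]] ?] //;
  by rewrite !mxE /= ?mulr1 ?mul1r ?eixNK // mulrC eixNK.
Qed.

Lemma Rmat_neq0 i j : Rm i j != 0.
Proof. by apply: contra_eq_neq (Rmat_mul_sym i j) => ->; rewrite mul0r eq_sym oner_neq0. Qed.

Lemma twist_neq0 a b : twist a b != 0.
Proof. by apply/prodf_neq0 => i _; apply/prodf_neq0 => j _; exact: expf_neq0 (Rmat_neq0 j i). Qed.

Definition mon0 : mon := fun _ => 0%N.
Definition emon (i : 'I_4) : mon := fun j => nat_of_bool (j == i).
Definition msub (m k : mon) : mon := fun j => (m j - k j)%N.

Lemma msubn0 m : msub m mon0 = m.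
Proof. by apply: funext => j; rewrite /msub subn0. Qed.

Lemma msubnn m : msub m m = mon0.
Proof. by apply: funext => j; rewrite /msub subnn. Qed.

Lemma twist0l b : twist mon0 b = 1.
Proof. by apply: big1 => i _; apply: big1 => j _; rewrite mul0n expr0. Qed.

Lemma twist0r b : twist b mon0 = 1.
Proof. by apply: big1 => i _; apply: big1 => j _; rewrite muln0 expr0. Qed.

Lemma twist_emonl i b : twist (emon i) b = \prod_(j < 4 | (j < i)%N) Rm j i ^+ b j.
Proof.
rewrite /Defs.twist (bigD1 i) //= [X in _ * X]big1 ?mulr1 => [|i' ne_i'i].
  by apply: eq_bigr => j _; rewrite /emon eqxx mul1n.
by apply: big1 => j _; rewrite /emon (negbTE ne_i'i) mul0n expr0.
Qed.

Lemma twist_emonr i b : twist b (emon i) = \prod_(j < 4 | (i < j)%N) Rm i j ^+ b j.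
Proof.
rewrite /Defs.twist [RHS]big_mkcond; apply: eq_bigr => i' _; case: ifP => [lt_ii'|ge_ii'].
  rewrite (bigD1 i) //= [X in _ * X]big1 ?mulr1 => [|j /andP[_ ne_ji]].
    by rewrite /emon eqxx muln1.
  by rewrite /emon (negbTE ne_ji) muln0 expr0.
apply: big1 => j lt_ji'; rewrite /emon; case: eqP => [eq_ji|_]; last by rewrite muln0 expr0.
by move: ge_ii'; rewrite -eq_ji lt_ji'.
Qed.

(* [z^i z^b = (prod_j (R^{ji})^{b_j}) z^b z^i], compared on the coefficient of [z^(b + e_i)]. *)
Lemma twist_emon_comm i b : twist (emon i) b = twist b (emon i) * \prod_j Rm j i ^+ b j.
Proof.
rewrite twist_emonl twist_emonr big_mkcond [in RHS]big_mkcond -big_split /=; apply: eq_bigr => j _.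
case: ltngtP => [_|_|/val_inj ->]; first by rewrite mul1r.
  by rewrite -exprMn Rmat_mul_sym expr1n.
by rewrite Rmat_diag expr1n mulr1.
Qed.

Lemma Aone_supp m : Aone R m != 0 -> m = mon0.
Proof.
rewrite /Aone; case: ifP => [/forallP eq0 _|]; last by rewrite eqxx.
by apply: funext => j; apply/eqP.
Qed.

Lemma Aone_mon0 : Aone R mon0 = 1.
Proof. by rewrite /Aone (_ : [forall k, _] = true) //; apply/forallP. Qed.

Lemma Az_supp i m : Az R i m != 0 -> m = emon i.
Proof.
rewrite /Az; case: ifP => [/forallP eq_e _|]; last by rewrite eqxx.
by apply: funext => j; apply/eqP; rewrite eq_e /emon; case: (j == i).
Qed.

Lemma Az_emon i : Az R i (emon i) = 1.
Proof. by rewrite /Az (_ : [forall k, _] = true) //; apply/forallP => k; rewrite /emon; case: (k == i). Qed.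

Lemma Amul_single a b m k1 :
  (forall k, (forall i, k i <= m i)%N -> a k != 0 -> b (msub m k) != 0 -> k = k1) ->
  Amul a b m = if [forall i, k1 i <= m i]%N then twist k1 (msub m k1) * a k1 * b (msub m k1) else 0.
Proof.
move=> supp; rewrite /Defs.Amul (big_dffun_single _ (k0 := k1)) /=.
  case: ifP => // /forallP le_k1m.
  have val_k1 : (fun i => nat_of_ord (dffun_of m k1 i)) = k1.
    by apply: funext => i; rewrite dffun_ofE.
  have val_mk1 : (fun i => m i - nat_of_ord (dffun_of m k1 i))%N = msub m k1.
    by apply: funext => i; rewrite dffun_ofE.
  by rewrite val_k1 val_mk1.
move=> k; rewrite !mulf_eq0 !negb_or => /andP[/andP[_ ak] bk] i.
have le_km j : (k j <= m j)%N by rewrite -ltnS.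
by rewrite -(supp _ le_km ak bk).
Qed.

Lemma Amul_1l a : Amul (Aone R) a = a.
Proof.
apply: funext => m; rewrite (Amul_single (k1 := mon0)) => [|k _ /Aone_supp //].
by rewrite (_ : [forall i, _] = true) ?twist0l ?Aone_mon0 ?msubn0 ?mul1r //; apply/forallP.
Qed.

Lemma Amul_1r a : Amul a (Aone R) = a.
Proof.
apply: funext => m; rewrite (Amul_single (k1 := m)) => [|k le_km _ /Aone_supp].
  by rewrite (_ : [forall i, _] = true) ?msubnn ?twist0r ?Aone_mon0 ?mulr1 ?mul1r //; apply/forallP.
move=> /(congr1 (fun f => f _)) mk0; apply: funext => j.
by have := mk0 j; have := le_km j; rewrite /msub /mon0; lia.
Qed.

Lemma Amul_0l a : Amul (Azero R) a = Azero R.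
Proof. by apply: funext => m; apply: big1 => k _; rewrite /Azero /= mulr0 mul0r. Qed.

Lemma Amul_0r a : Amul a (Azero R) = Azero R.
Proof. by apply: funext => m; apply: big1 => k _; rewrite /Azero /= mulr0. Qed.

Lemma Amul_Azl i a m : Amul (Az R i) a m =
  if (0 < m i)%N then twist (emon i) (msub m (emon i)) * a (msub m (emon i)) else 0.
Proof.
rewrite (Amul_single (k1 := emon i)) => [|k _ /Az_supp //].
have -> : [forall j, emon i j <= m j]%N = (0 < m i)%N.
  apply/forallP/idP => [/(_ i)|lt0m j]; first by rewrite /emon eqxx.
  by rewrite /emon; case: eqP => [->|].
by case: ifP; rewrite // Az_emon mulr1.
Qed.

Lemma Amul_Azr i a m : Amul a (Az R i) m =
  if (0 < m i)%N then twist (msub m (emon i)) (emon i) * a (msub m (emon i)) else 0.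
Proof.
rewrite (Amul_single (k1 := msub m (emon i))) => [|k le_km _ /Az_supp]; last first.
  move=> /(congr1 (fun f => f _)) mk_e; apply: funext => j.
  by have := mk_e j; have := le_km j; rewrite /msub /emon; case: (j == i) => /=; lia.
rewrite (_ : [forall j, _] = true); last by apply/forallP => j; exact: leq_subr.
case: ifP => lt0m.
  rewrite (_ : msub m (msub m (emon i)) = emon i) ?Az_emon ?mulr1 //.
  by apply: funext => j; rewrite /msub /emon; case: eqP => [->|_]; lia.
rewrite /Az (_ : [forall k, _] = false) ?mulr0 //; apply/negbTE/forallPn; exists i.
by rewrite eqxx /msub /emon eqxx; lia.
Qed.

Lemma Amul_Az_comm i y : Amul (Az R i) y = Amul (phiA i y) (Az R i).
Proof.
apply: funext => m; rewrite Amul_Azl Amul_Azr; case: ifP => // _.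
by rewrite /phiA twist_emon_comm mulrA.
Qed.

Lemma Amul_Az_rcancel i y y' : Amul y (Az R i) = Amul y' (Az R i) -> y = y'.
Proof.
move=> e; apply: funext => m; have := congr1 (fun f => f (fun j => m j + emon i j)%N) e.
rewrite /= !Amul_Azr.
have -> : msub (fun j => m j + emon i j)%N (emon i) = m.
  by apply: funext => j; rewrite /msub addnK.
have -> : (0 < m i + emon i i)%N by rewrite /emon eqxx addn1.
by move/(mulfI (twist_neq0 m (emon i))).
Qed.

Lemma AmulZl c a b : Amul (Ascale c a) b = Ascale c (Amul a b).
Proof. by apply: funext => m; rewrite /Ascale mulr_sumr; apply: eq_bigr => k _ /=; ring. Qed.

Lemma AmulZr c a b : Amul a (Ascale c b) = Ascale c (Amul a b).
Proof. by apply: funext => m; rewrite /Ascale mulr_sumr; apply: eq_bigr => k _ /=; ring. Qed.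

Lemma Amul_suml (I : Type) (r : seq I) (F : I -> Aelt R) b :
  Amul (fun m => \sum_(i <- r) F i m) b = fun m => \sum_(i <- r) Amul (F i) b m.
Proof.
apply: funext => m; rewrite /Defs.Amul exchange_big /=; apply: eq_bigr => k _.
by rewrite mulr_sumr mulr_suml.
Qed.

Lemma phiA_comm i j x : phiA i (phiA j x) = phiA j (phiA i x).
Proof. by apply: funext => m; rewrite /phiA mulrCA. Qed.

Lemma phiA_Az k i : phiA k (Az R i) = Ascale (Rm i k) (Az R i).
Proof.
apply: funext => m; rewrite /phiA /Ascale.
have [->|/Az_supp ->] := eqVneq (Az R i m) 0; first by rewrite !mulr0.
congr (_ * _); rewrite (bigD1 i) //= big1 ?mulr1 => [|j ne_ji]; first by rewrite /emon eqxx.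
by rewrite /emon (negbTE ne_ji).
Qed.

Lemma finsupp0 : finsupp (Azero R).
Proof. by exists 0%N => m; rewrite eqxx. Qed.

Lemma finsuppD (a b : Aelt R) : finsupp a -> finsupp b -> finsupp (Aadd a b).
Proof.
move=> [Na supp_a] [Nb supp_b]; exists (Na + Nb)%N => m abm i.
have [am0|/supp_a/(_ i)] := eqVneq (a m) 0; last by lia.
by move: abm; rewrite /Aadd am0 add0r => /supp_b/(_ i); lia.
Qed.

Lemma finsupp_sum (I : Type) (r : seq I) (F : I -> Aelt R) :
  (forall i, finsupp (F i)) -> finsupp (fun m => \sum_(i <- r) F i m).
Proof.
move=> suppF; elim: r => [|x r IH]; first by exists 0%N => m; rewrite big_nil eqxx.
have -> : (fun m => \sum_(i <- x :: r) F i m) = Aadd (F x) (fun m => \sum_(i <- r) F i m).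
  by apply: funext => m; rewrite big_cons.
exact: finsuppD.
Qed.

Lemma finsuppMr (a : Aelt R) c : finsupp a -> finsupp (fun m => a m * c).
Proof. by move=> [N supp_a]; exists N => m; rewrite mulf_eq0 negb_or => /andP[/supp_a]. Qed.

Lemma finsupp_phiA i (a : Aelt R) : finsupp a -> finsupp (phiA i a).
Proof. by move=> [N supp_a]; exists N => m; rewrite mulf_eq0 negb_or => /andP[_ /supp_a]. Qed.

Lemma finsupp_Az i : finsupp (Az R i).
Proof. by exists 2%N => m /Az_supp -> j; rewrite /emon; case: (j == i). Qed.

Lemma finsupp_Amul (a b : Aelt R) : finsupp a -> finsupp b -> finsupp (Amul a b).
Proof.
move=> [Na supp_a] [Nb supp_b]; exists (Na + Nb)%N => m nz_m i; rewrite ltnNge.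
apply: contra nz_m => ge_m; apply/eqP/big1 => k _ /=.
apply/eqP; rewrite !mulf_eq0 (negbTE (twist_neq0 _ _)) /=; apply: contraTT ge_m.
rewrite negb_or -ltnNge => /andP[/supp_a/(_ i) ak /supp_b/(_ i) bk].
by have := ltn_ord (k i); lia.
Qed.

End TwistedPolynomials.

Section Differential.
Variables (R : realType) (theta : R) (d : Aelt R -> 'I_4 -> Aelt R).
Hypothesis d_diff : is_differential theta d.
Local Notation Amul := (Amul theta).
Local Notation phiA := (phiA theta).

Lemma d0 k : d (Azero R) k = Azero R.
Proof.
case: d_diff => _ dZ _ _.
have scale0 (a : Aelt R) : Ascale 0 a = Azero R by apply: funext => m; rewrite /Ascale mul0r.
by move: (dZ 0 _ (finsupp0 R)) => /(congr1 (fun f => f k)); rewrite /= !scale0.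
Qed.

Lemma d_sum (I : Type) (r : seq I) (F : I -> Aelt R) k :
  (forall i, finsupp (F i)) ->
  d (fun m => \sum_(i <- r) F i m) k = fun m => \sum_(i <- r) d (F i) k m.
Proof.
case: d_diff => dD _ _ _ suppF; elim: r => [|x r IH].
  have -> : (fun m => \sum_(i <- [::]) F i m) = Azero R by apply: funext => m; rewrite big_nil.
  by rewrite d0; apply: funext => m; rewrite big_nil.
have -> : (fun m => \sum_(i <- x :: r) F i m) = Aadd (F x) (fun m => \sum_(i <- r) F i m).
  by apply: funext => m; rewrite big_cons.
rewrite dD /=; [|exact: suppF|exact: finsupp_sum].
by apply: funext => m; rewrite big_cons; congr (_ + _); exact (f_equal (fun f => f m) IH).
Qed.

Lemma d_mulr (a : Aelt R) c k : finsupp a -> d (fun m => a m * c) k = fun m => d a k m * c.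
Proof.
case: d_diff => _ dZ _ _ fa.
have scale_r (b : Aelt R) : (fun m => b m * c) = Ascale c b.
  by apply: funext => m; rewrite /Ascale mulrC.
by rewrite !scale_r dZ.
Qed.

(* Leibniz rule applied to [z^i x = phi_i(x) z^i], after cancelling [z^i] on the right. *)
Lemma d_phiA i x k : finsupp x -> d (phiA i x) k = Ascale (Rmat theta k i) (phiA i (d x k)).
Proof.
move=> fx; case: d_diff => _ _ dM dz.
have leib : d (Amul (Az R i) x) k = d (Amul (phiA i x) (Az R i)) k by rewrite Amul_Az_comm.
rewrite (dM _ _ (finsupp_Az R i) fx) (dM _ _ (finsupp_phiA theta i fx) (finsupp_Az R i)) /= dz in leib.
rewrite phiA_Az AmulZr Amul_Az_comm in leib.
have {}leib : Amul (phiA i (d x k)) (Az R i) = Ascale (Rmat theta i k) (Amul (d (phiA i x) k) (Az R i)).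
  apply: funext => m; move: (congr1 (fun f => f m) leib); rewrite /Aadd /=.
  case: (eqVneq k i) => [->|_]; last by rewrite Amul_0l Amul_0r /Azero addr0 add0r.
  by rewrite Amul_1l Amul_1r addrC => /addrI.
apply: (@Amul_Az_rcancel _ theta i); rewrite AmulZl leib.
by apply: funext => m; rewrite /Ascale mulrA Rmat_mul_sym mul1r.
Qed.

Lemma d_tensOE (w : Om1 R) (s : Esp R) k j a : finsupp (w j) -> finsupp (s a) ->
  d (tensOE theta w s j a) k = nabla_tens theta d w s k j a.
Proof.
move=> fw fs; case: d_diff => _ _ dM _.
rewrite /tensOE dM //=; last exact: finsupp_phiA.
rewrite d_phiA // AmulZr.
rewrite /nabla_tens /add2E /tens2E /sigma_id /tensO1E /nablaO /nabla_sp.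
by apply: funext => m; rewrite /Aadd addrC.
Qed.

Lemma nabla_sp_gammaA (w : Om1 R) (s : Esp R) :
  (forall i, finsupp (w i)) -> (forall a, finsupp (s a)) ->
  nabla_sp d (gammaA theta (tensOE theta w s)) = id_gammaA theta (nabla_tens theta d w s).
Proof.
move=> fw fs; apply: funext => k; apply: funext => b.
have fT i a : finsupp (fun m => tensOE theta w s i a m * gamma_theta theta i b a).
  by apply/finsuppMr/finsupp_Amul => //; exact: finsupp_phiA.
rewrite /nabla_sp /gammaA d_sum // => [|i]; last exact: finsupp_sum.
apply: funext => m; apply: eq_bigr => i _; rewrite d_sum //=; apply: eq_bigr => a _.
by rewrite d_mulr /= ?d_tensOE //; apply/finsupp_Amul => //; exact: finsupp_phiA.
Qed.

End Differential.

Section GammaMatrices.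
Variables (R : realType) (theta : R).
Local Notation gam := (gamma_theta theta).
Local Notation Amul := (Amul theta).
Local Notation phiA := (phiA theta).

Lemma offdiagE (U L : 'M[R[i]]_2) (i j : 'I_4) : offdiag U L i j =
  if (i < 2)%N then (if (j < 2)%N then 0 else U (inord i) (inord (j - 2)))
  else (if (j < 2)%N then L (inord (i - 2)) (inord j) else 0).
Proof.
rewrite /offdiag /block_mx mxE; case: splitP => i' def_i; rewrite mxE; case: splitP => j' def_j;
  rewrite ?mxE def_i def_j ?ltn_ord ?ltnNge ?leq_addr //=;
  by congr fun_of_matrix; apply: val_inj; rewrite /= inordK ?addKn // ltnS -ltnS ?ltn_ord.
Qed.

Lemma ci_pauli2 : ci R *: pauli2 R = mx_of_seq 2 [:: [:: 0; 1]; [:: -1; 0]].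
Proof.
apply/matrixP => x y; rewrite !mxE.
by case: x => [[|[|?]] ?] //; case: y => [[|[|?]] ?] //=; rewrite ?mulr0 ?mulrN ?ci_sqr ?opprK.
Qed.

Definition gamma_entry (q : R[i]) (i b a : nat) : R[i] :=
  match i, b, a with
  | 0%N, 0%N, 3%N => -2 * q | 0%N, 2%N, 1%N => 2 * q^-1
  | 1%N, 0%N, 2%N => -2 * q^-1 | 1%N, 3%N, 1%N => -2 * q
  | 2%N, 1%N, 2%N => -2 * q | 2%N, 3%N, 0%N => 2 * q^-1
  | 3%N, 1%N, 3%N => 2 * q^-1 | 3%N, 2%N, 0%N => 2 * q
  | _, _, _ => 0
  end.

Lemma gamma_thetaE i b a : gam i b a = gamma_entry (eix (theta / 4)) i b a.
Proof.
rewrite /gamma_theta eixN ci_pauli2.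
case: i => [[|[|[|[|?]]]] ?] //=; case: b => [[|[|[|[|?]]]] ?] //; case: a => [[|[|[|[|?]]]] ?] //;
  rewrite offdiagE /= ?mxE -?val_eqE /= ?inordK //=; ring.
Qed.

Lemma gamma_theta_clifford i j :
  gam i *m gam j + Rmat theta j i *: (gam j *m gam i) = (- 2 * ginv R i j) *: 1%:M.
Proof.
apply/matrixP => b a; rewrite /ginv !mxE !big_ord_recl !big_ord0 !gamma_thetaE /=.
rewrite eixN (eix_quarter theta); have := eix_neq0 (theta / 4); set q := eix (theta / 4) => q_neq0.
case: i => [[|[|[|[|?]]]] ?] //; case: j => [[|[|[|[|?]]]] ?] //;
case: b => [[|[|[|[|?]]]] ?] //; case: a => [[|[|[|[|?]]]] ?] //=; by field.
Qed.

Lemma Rmat_conj i j k : ginv R i j != 0 -> Rmat theta k i * Rmat theta k j = 1.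
Proof.
rewrite /ginv !mxE.
case: i => [[|[|[|[|?]]]] ?] //; case: j => [[|[|[|[|?]]]] ?] //;
case: k => [[|[|[|[|?]]]] ?] //=; rewrite ?mulr0 ?eqxx // => _;
by rewrite ?mulr1 ?mul1r ?eixNK // mulrC eixNK.
Qed.

Lemma phiA_conj i j x : ginv R i j != 0 -> phiA i (phiA j x) = x.
Proof.
move=> gij; apply: funext => m; rewrite /phiA mulrA -big_split /= big1 ?mul1r // => k _.
by rewrite -exprMn Rmat_conj // expr1n.
Qed.

Lemma gamma2AE (V : Om2E R) b m :
  gamma2A theta V b m = \sum_i \sum_j \sum_a V i j a m * (gam i *m gam j) b a.
Proof.
rewrite /gamma2A /gammaA /id_gammaA; apply: eq_bigr => i _.
under eq_bigr do rewrite mulr_suml; rewrite exchange_big; apply: eq_bigr => j _.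
under eq_bigr do rewrite mulr_suml; rewrite exchange_big; apply: eq_bigr => a _.
by rewrite mxE mulr_sumr; apply: eq_bigr => c _; rewrite mulrAC -mulrA.
Qed.

Lemma tens2E_sigmaO (W : Om2 R) (s : Esp R) i j a :
  tens2E theta (sigmaO theta W) s i j a = Ascale (Rmat theta i j) (tens2E theta W s j i a).
Proof. by rewrite /tens2E phiA_comm -AmulZl. Qed.

Lemma gamma2A_clifford (W : Om2 R) (s : Esp R) :
  addE (gamma2A theta (tens2E theta W s)) (gamma2A theta (tens2E theta (sigmaO theta W) s))
  = fun a => Amul (Ascale (-2) (ginvA W)) (s a).
Proof.
apply: funext => b; apply: funext => m; rewrite /addE /Aadd !gamma2AE.
under [X in _ + X]eq_bigr do under eq_bigr do under eq_bigr do rewrite tens2E_sigmaO.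
rewrite [X in _ + X]exchange_big -big_split AmulZl /Ascale /ginvA Amul_suml mulr_sumr /=.
apply: eq_bigr => i _; rewrite -big_split Amul_suml mulr_sumr; apply: eq_bigr => j _.
have cliff a : (gam i *m gam j) b a + Rmat theta j i * (gam j *m gam i) b a
    = - 2 * ginv R i j * (b == a)%:R.
  by have := congr1 (fun M : 'M[R[i]]_4 => M b a) (gamma_theta_clifford i j); rewrite !mxE.
have factor (x y z t : R[i]) : x * y + z * x * t = x * (y + z * t) by ring.
rewrite -big_split /=; under eq_bigr => a _ do rewrite factor cliff.
rewrite (bigD1 b) //= big1 ?addr0 => [|a ne_ab]; last by rewrite eq_sym (negbTE ne_ab) !mulr0.
have -> : (fun m => W i j m * ginv R i j) = Ascale (ginv R i j) (W i j).
  by apply: funext => m'; rewrite /Ascale mulrC.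
rewrite AmulZl /Ascale eqxx mulr1.
have [->|gij] := eqVneq (ginv R i j) 0; first by rewrite !(mulr0, mul0r).
by rewrite /tens2E phiA_conj //; ring.
Qed.

End GammaMatrices.

Theorem proposition4p6 (R : realType) (theta : R) (d : Aelt R -> 'I_4 -> Aelt R) :
  is_differential theta d ->
  (* Clifford relations *)
  (forall (w z : Om1 R) (s : Esp R),
     (forall i, finsupp (w i)) -> (forall i, finsupp (z i)) -> (forall a, finsupp (s a)) ->
     addE (gamma2A theta (tens2E theta (tensOO theta w z) s))
          (gamma2A theta (tens2E theta (sigmaO theta (tensOO theta w z)) s))
     = fun a => Amul theta (Ascale (-2) (ginvA (tensOO theta w z))) (s a))
  /\
  (* Clifford compatibility: nabla^sp o gamma = (id (x) gamma) o nabla^(x) *)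
  (forall (w : Om1 R) (s : Esp R),
     (forall i, finsupp (w i)) -> (forall a, finsupp (s a)) ->
     nabla_sp d (gammaA theta (tensOE theta w s))
     = id_gammaA theta (nabla_tens theta d w s)).
Proof.
move=> d_diff; split=> [w z s _ _ _ | w s]; first exact: gamma2A_clifford.
exact: nabla_sp_gammaA.
Qed.
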